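(* Let $(\alpha,\beta)\in\mathcal{A}(K,L,T)$. Then operations (1) and (2) (defined in the context) are not both applicable to $(\alpha,\beta)$. Moreover, applying operation (1) twice in succession, first with index $i$ and then with index $i'$, yields the same degree table as applying it first with index $i'$ and then with index $i$; the same holds for operation (2).
   Context: A degree table with parameters $K,L,T$ is a tuple $(\alpha_{\mathrm p},\alpha_{\mathrm s},\beta_{\mathrm p},\beta_{\mathrm s})$ of nonnegative integer vectors of lengths $K,T,L,T$ such that, with $\alpha=(\alpha_{\mathrm p}\mid\alpha_{\mathrm s})$, $\beta=(\beta_{\mathrm p}\mid\beta_{\mathrm s})$: entries of $\alpha$ are distinct; entries of $\beta$ are distinct; every $n\in\operatorname{Set}(\alpha_{\mathrm p})+\operatorname{Set}(\beta_{\mathrm p})$ has a unique representation $n=i+j$ with $i\in\operatorname{Set}(\alpha)$, $j\in\operatorname{Set}(\beta)$; $\mathcal{A}(K,L,T)$ is the set of these. For such a table let $p$, $q$ be the entries of $\alpha$, $\beta$ sorted increasingly, $a=\min\operatorname{Set}(\alpha)$, $A=\max\operatorname{Set}(\alpha)$, $b=\min\operatorname{Set}(\beta)$, $B=\max\operatorname{Set}(\beta)$. Operation (1) with index $i$ ($1\le i<K+T$) is applicable if $p_i+B<(p_{i+1}-1)+b$ and replaces $\alpha$ by $\alpha'$ with $\alpha'_j=\alpha_j$ if $\alpha_j\le p_i$ and $\alpha'_j=\alpha_j-1$ otherwise. Operation (2) with index $i$ ($1\le i<L+T$) is applicable if $q_i+A<(q_{i+1}-1)+a$ and replaces $\beta$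 by $\beta'$ with $\beta'_j=\beta_j$ if $\beta_j\le q_i$ and $\beta'_j=\beta_j-1$ otherwise. An operation is applicable to a table if it is applicable with some index; indices refer to the sorted order of the current table. *)

From mathcomp Require Import all_boot.
Set Implicit Arguments. Unset Strict Implicit. Unset Printing Implicit Defensive.

(* A (candidate) degree table: alpha_p, alpha_s, beta_p, beta_s.
   The lengths K, T, L, T are imposed by [inA]. *)
Record table := Table {
  alp : seq nat;
  als : seq nat;
  bep : seq nat;
  bes : seq nat
}.

Definition alpha (t : table) : seq nat := alp t ++ als t.
Definition beta  (t : table) : seq nat := bep t ++ bes t.

Definition inA (K L T : nat) (t : table) : Prop :=
  [/\ size (alp t) = K, size (als t) = T, size (bep t) = L & size (bes t) = T] /\
  uniq (alpha t) /\ uniq (beta t) /\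
      (forall x y, x \in alp t -> y \in bep t ->
      forall i j i' j', i \in alpha t -> j \in beta t ->
        i' \in alpha t -> j' \in beta t ->
        i + j = x + y -> i' + j' = x + y -> i = i' /\ j = j').

(* sorted entries p (of alpha) and q (of beta), 1-based indexing *)
Definition psort (t : table) : seq nat := sort leq (alpha t).
Definition qsort (t : table) : seq nat := sort leq (beta t).
Definition pidx (t : table) (i : nat) : nat := nth 0 (psort t) i.-1.
Definition qidx (t : table) (i : nat) : nat := nth 0 (qsort t) i.-1.

Definition amin (t : table) : nat := head 0 (psort t).
Definition amax (t : table) : nat := last 0 (psort t).
Definition bmin (t : table) : nat := head 0 (qsort t).
Definition bmax (t : table) : nat := last 0 (qsort t).

(* Operation (1) with index i is applicable:
   1 <= i < K+T  and  p_i + B < (p_{i+1} - 1) + b  (integer inequality,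
   written without subtraction). *)
Definition app1 (t : table) (i : nat) : bool :=
  (1 <= i < size (alpha t)) && (pidx t i + bmax t + 1 < pidx t i.+1 + bmin t).

Definition app2 (t : table) (i : nat) : bool :=
  (1 <= i < size (beta t)) && (qidx t i + amax t + 1 < qidx t i.+1 + amin t).

Definition shift (c x : nat) : nat := if x <= c then x else x - 1.

Definition op1 (t : table) (i : nat) : table :=
  Table (map (shift (pidx t i)) (alp t)) (map (shift (pidx t i)) (als t))
        (bep t) (bes t).

Definition op2 (t : table) (i : nat) : table :=
  Table (alp t) (als t)
        (map (shift (qidx t i)) (bep t)) (map (shift (qidx t i)) (bes t)).

Definition applicable1 (t : table) : Prop := exists i, app1 t i.
Definition applicable2 (t : table) : Prop := exists i, app2 t i.

From mathcomp Require Import all_boot zify.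

Set Implicit Arguments.
Unset Strict Implicit.

(* Both operations only look at the sorted entries, so everything reduces to a
   sorted duplicate-free sequence [s] with a "gap" at [i]: s_(i-1) + B + 1 <
   s_i + b.  A gap forces head s + B + 1 < last s + b; a gap in alpha (margins
   b, B taken from beta) and one in beta (margins a, A taken from alpha) would
   add up to a + B + b + A + 2 < A + b + B + a.  Operation (1) relabels the
   entries by the monotone map [shift c], and any two such maps commute once
   each threshold is relabelled by the other map; a gap at [i] survives the
   relabelling at another gap [i'] because the entries s_(i-1), s_i lie on the
   same side of s_(i'-1), while relabelling never creates a gap since it lowers
   entries by at most one and preserves their order. *)

Ltac case_if := match goal with |- context[if ?b then _ else _] =>
  lazymatch b with context[if _ then _ else _] => fail | _ =>
  let H := fresh in case H: b; [ | move/negbT: H => H] end end.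
Ltac shift_lia := rewrite /shift; repeat case_if; lia.

Lemma shift_homo c : {homo shift c : x y / x <= y}.
Proof. by move=> x y; shift_lia. Qed.

Lemma shiftC c c' x :
  shift (shift c c') (shift c x) = shift (shift c' c) (shift c' x).
Proof. shift_lia. Qed.

Lemma sort_map_shift c s :
  sort leq (map (shift c) s) = map (shift c) (sort leq s).
Proof.
rewrite -[RHS](sorted_sort leq_trans); last first.
  exact: homo_sorted (shift_homo c) _ (sort_sorted leq_total s).
apply/(perm_sortP leq_total leq_trans anti_leq).
by apply: perm_map; rewrite perm_sym perm_sort.
Qed.

Lemma nth_map_shift c s k : nth 0 (map (shift c) s) k = shift c (nth 0 s k).
Proof.
have [ks|sk] := ltnP k (size s); first by rewrite (nth_map 0).
by rewrite !nth_default ?size_map.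
Qed.

Definition gap_at (s : seq nat) (b B i : nat) : bool :=
  (1 <= i < size s) && (nth 0 s i.-1 + B + 1 < nth 0 s i + b).

Section Gaps.

Variable s : seq nat.
Hypothesis s_sorted : sorted leq s.

Lemma sorted_nth_leq m k : m <= k -> k < size s -> nth 0 s m <= nth 0 s k.
Proof.
move=> mk ks; apply: (sorted_leq_nth leq_trans leqnn 0 s_sorted) => //.
by rewrite inE; apply: leq_ltn_trans ks.
Qed.

Lemma gap_at_head_last b B i : gap_at s b B i -> head 0 s + B + 1 < last 0 s + b.
Proof.
move=> /andP[/andP[i_gt0 i_lt] gap].
have : head 0 s <= nth 0 s i.-1 by rewrite -nth0 sorted_nth_leq //; lia.
have : nth 0 s i <= last 0 s by rewrite -nth_last sorted_nth_leq //; lia.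
lia.
Qed.

Lemma gap_at_unshift b B c i :
  gap_at (map (shift (nth 0 s c)) s) b B i -> gap_at s b B i.
Proof.
rewrite /gap_at size_map !nth_map_shift => /andP[/andP[i_gt0 i_lt] gap].
have := sorted_nth_leq (leq_pred i) i_lt.
by rewrite i_gt0 i_lt /=; move: gap; shift_lia.
Qed.

Hypothesis s_uniq : uniq s.

Lemma sorted_uniq_nth_ltn m k : m < k -> k < size s -> nth 0 s m < nth 0 s k.
Proof.
have s_ltn : sorted ltn s by rewrite ltn_sorted_uniq_leq s_uniq s_sorted.
move=> mk ks; apply: (sorted_ltn_nth ltn_trans 0 s_ltn) => //.
by rewrite inE; apply: ltn_trans ks.
Qed.

Lemma gap_at_shift b B i i' : i != i' -> 0 < i' <= size s ->
  gap_at s b B i -> gap_at (map (shift (nth 0 s i'.-1)) s) b B i.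
Proof.
rewrite /gap_at size_map !nth_map_shift => neq i'_bnd /andP[/andP[i_gt0 i_lt] gap].
rewrite i_gt0 i_lt /=.
have := sorted_nth_leq (leq_pred i) i_lt.
have [lt_i'i | lt_ii'] : i' < i \/ i < i' by lia.
- have : nth 0 s i'.-1 < nth 0 s i.-1 by apply: sorted_uniq_nth_ltn; lia.
  by move: gap; shift_lia.
- have : nth 0 s i <= nth 0 s i'.-1 by apply: sorted_nth_leq; lia.
  by move: gap; shift_lia.
Qed.

Lemma gap_atC b B i i' : gap_at s b B i ->
  gap_at (map (shift (nth 0 s i.-1)) s) b B i' ->
  gap_at s b B i' /\ gap_at (map (shift (nth 0 s i'.-1)) s) b B i.
Proof.
move=> gap_i gap_i'; have gap_i'_s := gap_at_unshift gap_i'.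
split=> //; have [eq_ii' | neq] := eqVneq i i'; first by subst i'.
apply: gap_at_shift gap_i => //.
by case/andP: gap_i'_s => /andP[? ?] _; lia.
Qed.

End Gaps.

Lemma app1E t i : app1 t i = gap_at (psort t) (bmin t) (bmax t) i.
Proof. by rewrite /app1 /gap_at size_sort. Qed.

Lemma app2E t i : app2 t i = gap_at (qsort t) (amin t) (amax t) i.
Proof. by rewrite /app2 /gap_at size_sort. Qed.

Lemma psort_op1 t i : psort (op1 t i) = map (shift (pidx t i)) (psort t).
Proof. by rewrite /psort /alpha /= -map_cat sort_map_shift. Qed.

Lemma qsort_op2 t i : qsort (op2 t i) = map (shift (qidx t i)) (qsort t).
Proof. by rewrite /qsort /beta /= -map_cat sort_map_shift. Qed.

Lemma pidx_op1 t i i' : pidx (op1 t i) i' = shift (pidx t i) (pidx t i').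
Proof. by rewrite /pidx psort_op1 nth_map_shift. Qed.

Lemma qidx_op2 t i i' : qidx (op2 t i) i' = shift (qidx t i) (qidx t i').
Proof. by rewrite /qidx qsort_op2 nth_map_shift. Qed.

Lemma op1C t i i' : op1 (op1 t i) i' = op1 (op1 t i') i.
Proof.
rewrite {1}/op1 [op1 (op1 t i') i]/op1 !pidx_op1 /op1 /=.
by congr Table; rewrite -!map_comp; apply: eq_map => x /=; rewrite shiftC.
Qed.

Lemma op2C t i i' : op2 (op2 t i) i' = op2 (op2 t i') i.
Proof.
rewrite {1}/op2 [op2 (op2 t i') i]/op2 !qidx_op2 /op2 /=.
by congr Table; rewrite -!map_comp; apply: eq_map => x /=; rewrite shiftC.
Qed.

Lemma app1_op1C t i i' : uniq (alpha t) -> app1 t i -> app1 (op1 t i) i' ->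
  app1 t i' /\ app1 (op1 t i') i.
Proof.
rewrite !app1E !psort_op1 => uniq_alpha.
by apply: gap_atC; rewrite ?sort_sorted ?sort_uniq //; apply: leq_total.
Qed.

Lemma app2_op2C t i i' : uniq (beta t) -> app2 t i -> app2 (op2 t i) i' ->
  app2 t i' /\ app2 (op2 t i') i.
Proof.
rewrite !app2E !qsort_op2 => uniq_beta.
by apply: gap_atC; rewrite ?sort_sorted ?sort_uniq //; apply: leq_total.
Qed.

Lemma not_applicable1_2 t : ~ (applicable1 t /\ applicable2 t).
Proof.
case=> [[i]]; rewrite app1E => /gap_at_head_last gap1 [j].
rewrite app2E => /gap_at_head_last gap2.
have := gap1 (sort_sorted leq_total _); have := gap2 (sort_sorted leq_total _).
rewrite /amin /amax /bmin /bmax; lia.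
Qed.

Theorem lemma5 (K L T : nat) (t : table) :
  inA K L T t ->
  ~ (applicable1 t /\ applicable2 t) /\
  (forall i i', app1 t i -> app1 (op1 t i) i' ->
     [/\ app1 t i', app1 (op1 t i') i & op1 (op1 t i) i' = op1 (op1 t i') i]) /\
  (forall i i', app2 t i -> app2 (op2 t i) i' ->
     [/\ app2 t i', app2 (op2 t i') i & op2 (op2 t i) i' = op2 (op2 t i') i]).
Proof.
move=> [_ [uniq_alpha [uniq_beta _]]].
split; first exact: not_applicable1_2.
split=> i i' app_i app_i'.
- by have [] := app1_op1C uniq_alpha app_i app_i'; split=> //; apply: op1C.
- by have [] := app2_op2C uniq_beta app_i app_i'; split=> //; apply: op2C.
Qed.
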